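(* Let $(S,\mathscr{S})$ be a measurable space, $n\le N$, and $X=(X_1,\ldots,X_n)$ an exchangeable random element of $S^n$. The functional $\mathcal E^N_n$ defined on the linear subspace $U^N_n(b(S^n))\subset b(S^N)$ by $\mathcal E^N_n(U^N_ng):=\mathbb{E}\,g(X_1,\ldots,X_n)$ (which is well defined) is a bounded linear map into $\mathbb{R}$, and its operator norm with respect to the sup norm is at least $1$.
   Context: $b(S^k)$ is the Banach space of bounded measurable functions $S^k\to\mathbb{R}$ with the sup norm. $X$ is exchangeable if its law is invariant under all permutations of coordinates. With $\mathfrak S[n,N]$ the set of injections $\{1,\ldots,n\}\to\{1,\ldots,N\}$ and $(N)_n=N(N-1)\cdots(N-n+1)$, $U^N_ng(x_1,\ldots,x_N)=\frac1{(N)_n}\sum_{\sigma\in\mathfrak S[n,N]}g(x_{\sigma(1)},\ldots,x_{\sigma(n)})$. *)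

From HB Require Import structures.
From mathcomp Require Import all_boot all_order all_algebra perm.
From mathcomp Require Import all_classical all_reals all_analysis.
Set Implicit Arguments. Unset Strict Implicit. Unset Printing Implicit Defensive.
Import Order.TTheory GRing.Theory Num.Theory.
Local Open Scope classical_set_scope.
Local Open Scope ring_scope.

(* S^k is modelled by [k.-tuple S], equipped with the
   library's product sigma-algebra (generated by the coordinate projections). *)

Definition bmeas {d} (S : measurableType d) (R : realType) (k : nat)
  (g : k.-tuple S -> R) : Prop :=
  measurable_fun setT g /\ exists M : R, forall x, `|g x| <= M.

Definition supnorm {T : Type} (R : realType) (f : T -> R) : R :=
  sup (range (fun x => `|f x|)).

Definition subtuple {S : Type} (n N : nat) (s : {ffun 'I_n -> 'I_N})
  (x : N.-tuple S) : n.-tuple S := [tuple tnth x (s i) | i < n].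

Definition U_op {S : Type} (R : realType) (n N : nat) (g : n.-tuple S -> R)
  (x : N.-tuple S) : R :=
  (N ^_ n)%:R^-1 * \sum_(s : {ffun 'I_n -> 'I_N} | injectiveb s) g (subtuple s x).

Definition perm_tuple {S : Type} (n : nat) (p : {perm 'I_n}) (x : n.-tuple S)
  : n.-tuple S := [tuple tnth x (p i) | i < n].

Definition exchangeable {d d'} (Om : measurableType d') (S : measurableType d)
  (R : realType) (P : probability Om R) (n : nat) (X : Om -> n.-tuple S) : Prop :=
  forall (p : {perm 'I_n}) (A : set (n.-tuple S)), measurable A ->
    P ((fun w => perm_tuple p (X w)) @^-1` A) = P (X @^-1` A).
Arguments U_op {S R n} N g x.

(* By exchangeability, E g(X) = E (sym g)(X) / n!, where sym g sums g over all
   permutations of the coordinates, so it suffices to bound sup |sym g| by a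
   multiple of sup |U^N_n g|.  Given x in S^n and t : [n] -> [n], evaluate the
   unnormalised U-statistic at the N-tuple y = (x_t(1), ..., x_t(n), x_1, ..., x_1).
   Each injection s : [n] -> [N] contributes sym g(x o u) with u = pad(t) o s; the
   map u takes the value 1 at least as often as t does, and if exactly as often it
   is t composed with a permutation.  So sym g(x o t) is a positive multiple of the
   U-statistic at y up to terms in which 1 is taken more often, and downward
   induction on the number of 1s in t bounds |sym g(x o t)|; t = id gives the bound.
   Well-definedness and linearity follow by applying it to g - (a g1 + b g2), and
   g = 1 shows that the operator norm is at least 1. *)

From HB Require Import structures.
From mathcomp Require Import all_boot all_order all_algebra.
From mathcomp Require Import perm zify ring.
Import Order.TTheory GRing.Theory Num.Theory.
Set Implicit Arguments. Unset Strict Implicit. Unset Printing Implicit Defensive.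
Local Open Scope ring_scope.

Lemma subtuple_comp (S : Type) n m N (s : {ffun 'I_n -> 'I_m}) (t : {ffun 'I_m -> 'I_N})
    (x : N.-tuple S) :
  subtuple s (subtuple t x) = subtuple [ffun i => t (s i)] x.
Proof. by apply: eq_from_tnth => i; rewrite !tnth_mktuple ffunE. Qed.

Lemma perm_tuple_subtuple (S : Type) n N (p : {perm 'I_n}) (s : {ffun 'I_n -> 'I_N})
    (x : N.-tuple S) :
  perm_tuple p (subtuple s x) = subtuple [ffun i => s (p i)] x.
Proof. by apply: eq_from_tnth => i; rewrite !tnth_mktuple ffunE. Qed.

Lemma perm_tupleM (S : Type) n (p q : {perm 'I_n}) (x : n.-tuple S) :
  perm_tuple p (perm_tuple q x) = perm_tuple (p * q) x.
Proof. by apply: eq_from_tnth => i; rewrite !tnth_mktuple permM. Qed.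

Lemma subtuple_id (S : Type) n (x : n.-tuple S) : subtuple [ffun i => i] x = x.
Proof. by apply: eq_from_tnth => i; rewrite tnth_mktuple ffunE. Qed.

Lemma injectiveb_comp_perm n N (p : {perm 'I_n}) (s : {ffun 'I_n -> 'I_N}) :
  injectiveb [ffun i => s (p i)] = injectiveb s.
Proof.
apply/injectiveP/injectiveP => s_inj i j.
  by move=> eq_s; apply: (can_inj (permKV p)); apply: s_inj; rewrite !ffunE !permKV.
by rewrite !ffunE => /s_inj /perm_inj.
Qed.

Lemma card_preimset_inj n N (s : {ffun 'I_n -> 'I_N}) (B : {set 'I_N}) :
  injective s -> #|[set i | s i \in B]| = #|B :&: s @: [set: 'I_n]|.
Proof.
move=> s_inj; rewrite -(card_imset _ s_inj); apply: eq_card => j; rewrite !inE.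
apply/imsetP/andP => [[i]|[Bj /imsetP [i _ eq_j]]].
  by rewrite inE => Bsi ->; split => //; apply: imset_f.
by exists i; rewrite // inE -eq_j.
Qed.

Lemma perm_of_card_fibres n (t u : {ffun 'I_n -> 'I_n}) :
  (forall a, #|[set i | u i == a]| = #|[set i | t i == a]|) ->
  exists p : {perm 'I_n}, forall i, u i = t (p i).
Proof.
move=> eq_fibres.
have count_fibre (v : {ffun 'I_n -> 'I_n}) a :
    count_mem a [tuple v i | i < n] = #|[set i | v i == a]|.
  rewrite cardsE /= cardE count_map -size_filter /enum_mem; congr size.
  by rewrite -filter_predI; apply: eq_filter => i /=; rewrite !inE andbT.
have : perm_eq [tuple u i | i < n] [tuple t i | i < n].
  by apply/allP => a _ /=; rewrite !count_fibre eq_fibres.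
case/tuple_permP => p eq_ut; exists p => i.
by have := congr1 (fun w : n.-tuple 'I_n => tnth w i) (val_inj eq_ut); rewrite /= !tnth_mktuple.
Qed.

Section Symmetrization.
Variables (S : Type) (R : zmodType) (n : nat).
Implicit Types (g : n.-tuple S -> R) (z : n.-tuple S).

Definition symmetrize g z : R := \sum_(p : {perm 'I_n}) g (perm_tuple p z).

Lemma symmetrize_perm g q z : symmetrize g (perm_tuple q z) = symmetrize g z.
Proof.
rewrite /symmetrize (reindex_inj (mulIg q^-1)%g) /=; apply: eq_bigr => p _.
by rewrite perm_tupleM -mulgA mulVg mulg1.
Qed.

Variable N : nat.

Definition Usum g (y : N.-tuple S) : R :=
  \sum_(s : {ffun 'I_n -> 'I_N} | injectiveb s) g (subtuple s y).

Lemma sum_symmetrize_subtuple g y :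
  \sum_(s : {ffun 'I_n -> 'I_N} | injectiveb s) symmetrize g (subtuple s y) =
  Usum g y *+ #|{perm 'I_n}|.
Proof.
rewrite /symmetrize exchange_big /= -sumr_const; apply: eq_bigr => p _.
have comp_inj : injective (fun s : {ffun 'I_n -> 'I_N} => [ffun i => s (p i)]).
  move=> s1 s2 /ffunP eq_s; apply/ffunP => j.
  by have := eq_s (p^-1 j)%g; rewrite !ffunE permKV.
under eq_bigr do rewrite perm_tuple_subtuple.
rewrite /Usum [RHS](reindex_inj comp_inj) /=.
by apply: eq_bigl => s; rewrite injectiveb_comp_perm.
Qed.

End Symmetrization.

Section Padding.
Variables n N : nat.
Hypotheses (n_gt0 : (0 < n)%N) (n_le_N : (n <= N)%N).
Implicit Types (t : {ffun 'I_n -> 'I_n}) (s : {ffun 'I_n -> 'I_N}).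

Let i0 := Ordinal n_gt0.

Definition pad_map t : {ffun 'I_N -> 'I_n} :=
  [ffun j : 'I_N => if insub (val j) is Some i then t i else i0].

Definition zeros_card t := #|[set i | t i == i0]|.

Lemma pad_map_widen t i : pad_map t (widen_ord n_le_N i) = t i.
Proof.
rewrite ffunE; case: insubP => [i' _ eq_i|]; last by rewrite /= ltn_ord.
by congr (t _); apply: val_inj; rewrite eq_i.
Qed.

Lemma widen_ord_inj : injective (widen_ord n_le_N).
Proof. by move=> i j /(congr1 val) /= /val_inj. Qed.

Lemma pad_map_preimset t (P : pred 'I_n) : ~~ P i0 ->
  [set j | P (pad_map t j)] = widen_ord n_le_N @: [set i | P (t i)].
Proof.
move=> NPi0; apply/setP => j; rewrite inE.
have [j_lt_n|j_ge_n] := ltnP j n.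
  have -> : j = widen_ord n_le_N (Ordinal j_lt_n) by apply: val_inj.
  by rewrite pad_map_widen (mem_imset _ _ widen_ord_inj) inE.
rewrite ffunE; case: insubP => [i' /=|_]; first by rewrite ltnNge j_ge_n.
rewrite (negbTE NPi0); apply/esym/imsetP => -[i _ eq_j].
by move: j_ge_n; rewrite eq_j /= leqNgt ltn_ord.
Qed.

Section PadComp.
Variables (t : {ffun 'I_n -> 'I_n}) (s : {ffun 'I_n -> 'I_N}).
Hypothesis s_inj : injective s.

Let u := [ffun i => pad_map t (s i)].
Let support := [set j | pad_map t j != i0].
Let image := s @: [set: 'I_n].

Let card_image : #|image| = n.
Proof. by rewrite card_imset // cardsT card_ord. Qed.

Let card_support : (#|support| + zeros_card t)%N = n.
Proof.
rewrite /support (pad_map_preimset t (P := fun a => a != i0)) ?eqxx //.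
rewrite card_imset; last exact: widen_ord_inj.
have -> : [set i | t i != i0] = ~: [set i | t i == i0] by apply/setP => i; rewrite !inE.
by rewrite /zeros_card addnC cardsC card_ord.
Qed.

Let zeros_card_u : zeros_card u = #|image :\: support|.
Proof.
rewrite /zeros_card setDE setIC -card_preimset_inj //.
by apply: eq_card => i; rewrite !inE ffunE negbK.
Qed.

Hypothesis u_zeros : (zeros_card u <= zeros_card t)%N.

(* [u] has at least [zeros_card t] zeros, with equality only if [s] covers the support. *)
Let support_sub_image : support \subset image.
Proof.
have := cardsID support image; rewrite card_image -zeros_card_u => card_split.
have card_cap : #|image :&: support| = #|support|.
  apply/eqP; rewrite eqn_leq subset_leq_card ?subsetIr //= -(leq_add2r (zeros_card u)).
  by rewrite card_split -card_support leq_add2l.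
by apply/setIidPr/eqP; rewrite eqEcard subsetIr card_cap leqnn.
Qed.

Lemma card_fibres_pad_comp a :
  #|[set i | u i == a]| = #|[set i | t i == a]|.
Proof.
have [->|a_nz] := eqVneq a i0.
  have := cardsID support image; rewrite card_image -zeros_card_u.
  rewrite (setIidPr support_sub_image) -/(zeros_card u) -/(zeros_card t); lia.
have -> : [set i | u i == a] = [set i | s i \in [set j | pad_map t j == a]].
  by apply/setP => i; rewrite !inE ffunE.
have fibre_sub : [set j | pad_map t j == a] \subset image.
  apply: subset_trans support_sub_image; apply/subsetP => j.
  by rewrite !inE => /eqP ->.
rewrite card_preimset_inj // (setIidPl fibre_sub).
rewrite (pad_map_preimset t (P := fun b => b == a)) /=; last by rewrite eq_sym.
by rewrite card_imset //; exact: widen_ord_inj.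
Qed.

End PadComp.

Lemma pad_comp_perm t s : injective s ->
  (zeros_card [ffun i => pad_map t (s i)] <= zeros_card t)%N ->
  exists p : {perm 'I_n}, forall i, pad_map t (s i) = t (p i).
Proof.
move=> s_inj u_zeros.
case: (perm_of_card_fibres (card_fibres_pad_comp s_inj u_zeros)) => p eq_u.
by exists p => i; have := eq_u i; rewrite ffunE.
Qed.

End Padding.

Section SymmetrizeBound.
Variables (S : Type) (R : numDomainType) (n N : nat).
Hypotheses (n_gt0 : (0 < n)%N) (n_le_N : (n <= N)%N).
Variables (g : n.-tuple S -> R) (M : R).
Hypotheses (M_ge0 : 0 <= M) (Usum_le : forall y : N.-tuple S, `|Usum g y| <= M).

Let zeros := zeros_card n_gt0.
Let pad_comp t (s : {ffun 'I_n -> 'I_N}) := [ffun i => pad_map N n_gt0 t (s i)].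

(* Evaluating [Usum g] at the padded tuple returns [symmetrize g (subtuple t x)] a
   positive number of times, plus terms whose index maps have strictly more zeros. *)
Lemma symmetrize_le_Usum_pad x t :
  `|symmetrize g (subtuple t x)| <=
  `|Usum g (subtuple (pad_map N n_gt0 t) x)| *+ #|{perm 'I_n}| +
  \sum_(s : {ffun 'I_n -> 'I_N} | injectiveb s && (zeros t < zeros (pad_comp t s))%N)
    `|symmetrize g (subtuple (pad_comp t s) x)|.
Proof.
set y := subtuple (pad_map N n_gt0 t) x; set z := symmetrize g (subtuple t x).
have := sum_symmetrize_subtuple g y.
under eq_bigr do rewrite subtuple_comp.
rewrite (bigID (fun s => zeros (pad_comp t s) <= zeros t)%N) /=.
have same_orbit (s : {ffun 'I_n -> 'I_N}) :
    injectiveb s && (zeros (pad_comp t s) <= zeros t)%N ->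
    symmetrize g (subtuple (pad_comp t s) x) = z.
  case/andP => /injectiveP s_inj zeros_le.
  have [p eq_s] := pad_comp_perm n_le_N s_inj zeros_le.
  rewrite /z -(symmetrize_perm g p (subtuple t x)) perm_tuple_subtuple.
  by congr (symmetrize g (subtuple _ x)); apply/ffunP => i; rewrite [LHS]ffunE eq_s ffunE.
rewrite (eq_bigr _ same_orbit) sumr_const; set G := #|_|.
have G_gt0 : (0 < G)%N.
  apply/card_gt0P; exists [ffun i => widen_ord n_le_N i]; rewrite unfold_in /=.
  have -> : pad_comp t [ffun i => widen_ord n_le_N i] = t.
    by apply/ffunP => i; rewrite ffunE [X in pad_map _ _ _ X]ffunE pad_map_widen.
  by rewrite leqnn andbT; apply/injectiveP => i j; rewrite !ffunE => /widen_ord_inj.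
move=> /(canRL (addrK _)) eq_z.
apply: le_trans (_ : `|z *+ G| <= _).
  by rewrite normrMn -(prednK G_gt0) mulrS lerDl mulrn_wge0.
rewrite eq_z -normrMn; apply: le_trans (ler_normB _ _) _; apply: lerD => //.
apply: le_trans (ler_norm_sum _ _ _) _.
by rewrite le_eqVlt; apply/orP; left; apply/eqP/eq_bigl => s; rewrite ltnNge.
Qed.

Definition symmetrize_bound k : R :=
  iter k (fun c => #|{perm 'I_n}|%:R + #|{ffun 'I_n -> 'I_N}|%:R * c) 0.

Lemma symmetrize_bound_ge0 k : 0 <= symmetrize_bound k.
Proof. by elim: k => //= k IHk; rewrite addr_ge0 ?mulr_ge0. Qed.

Lemma symmetrize_subtuple_le k x t : (n.+1 - k <= zeros t)%N ->
  `|symmetrize g (subtuple t x)| <= symmetrize_bound k * M.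
Proof.
elim: k x t => [|k IHk] x t.
  by rewrite subn0 ltnNge => /negP; case; rewrite -(card_ord n) max_card.
move=> zeros_ge; apply: le_trans (symmetrize_le_Usum_pad x t) _.
rewrite /= mulrDl mulr_natl -mulrA mulr_natl; apply: lerD; first exact: ler_wMn2r.
apply: le_trans (_ : _ <= \sum_(s : {ffun 'I_n -> 'I_N}) symmetrize_bound k * M) _.
  rewrite [leRHS](bigID (fun s : {ffun 'I_n -> 'I_N} =>
    injectiveb s && (zeros t < zeros (pad_comp t s))%N)) /=.
  rewrite -[leLHS]addr0; apply: lerD.
    by apply: ler_sum => s /andP [_ lt_zeros]; apply: IHk; lia.
  by apply: sumr_ge0 => s _; rewrite mulr_ge0 ?symmetrize_bound_ge0.
by rewrite sumr_const.
Qed.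

Lemma symmetrize_le x : `|symmetrize g x| <= symmetrize_bound n * M.
Proof.
rewrite -[x]subtuple_id; apply: symmetrize_subtuple_le.
rewrite subSnn /zeros /zeros_card (_ : [set i | _] = [set Ordinal n_gt0]) ?cards1 //.
by apply/setP => i; rewrite !inE ffunE.
Qed.

End SymmetrizeBound.

From mathcomp Require Import all_classical all_reals all_analysis measurable_realfun.
Local Open Scope classical_set_scope.

Lemma measurable_perm_tuple d (S : measurableType d) n (p : {perm 'I_n}) :
  measurable_fun setT (perm_tuple (S := S) p).
Proof.
apply/measurable_fun_tnthP => i.
have -> : (fun x : n.-tuple S => tnth x i) \o perm_tuple p = (fun x => tnth x (p i)).
  by apply/funext => x /=; rewrite tnth_mktuple.
exact: measurable_tnth.
Qed.

Lemma bmeasD d (S : measurableType d) (R : realType) n (f1 f2 : n.-tuple S -> R) :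
  bmeas f1 -> bmeas f2 -> bmeas (fun x => f1 x + f2 x).
Proof.
move=> [mf1 [M1 le_f1]] [mf2 [M2 le_f2]]; split; first exact: measurable_funD.
by exists (M1 + M2) => x; apply: le_trans (ler_normD _ _) (lerD (le_f1 x) (le_f2 x)).
Qed.

Lemma bmeasB d (S : measurableType d) (R : realType) n (f1 f2 : n.-tuple S -> R) :
  bmeas f1 -> bmeas f2 -> bmeas (fun x => f1 x - f2 x).
Proof.
move=> [mf1 [M1 le_f1]] [mf2 [M2 le_f2]]; split; first exact: measurable_funB.
by exists (M1 + M2) => x; apply: le_trans (ler_normB _ _) (lerD (le_f1 x) (le_f2 x)).
Qed.

Lemma bmeas_cst d (S : measurableType d) (R : realType) n (c : R) :
  bmeas (fun _ : n.-tuple S => c).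
Proof. by split; [exact: measurable_cst | exists `|c|]. Qed.

Lemma bmeasZ d (S : measurableType d) (R : realType) n (a : R) (f : n.-tuple S -> R) :
  bmeas f -> bmeas (fun x => a * f x).
Proof.
move=> [mf [M le_f]]; split; first exact: measurable_funM.
by exists (`|a| * M) => x; rewrite normrM ler_wpM2l.
Qed.

Section Expectation.
Variables (R : realType) (d' : measure_display) (Om : measurableType d').
Variable P : probability Om R.

(* [probability_setT] through the measure coercion, as [P setT] appears in integrals. *)
Let P_setT : (P : {measure set Om -> \bar R}) setT = 1%E := probability_setT P.

Lemma bounded_integrable (h : Om -> R) (B : R) :
  measurable_fun setT h -> (forall w, `|h w| <= B) -> P.-integrable setT (EFin \o h).
Proof.
move=> mh le_h; apply: measurable_bounded_integrable => //.
  by rewrite P_setT ltry.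
exists B; split; first exact: num_real.
by move=> K lt_BK w _ /=; apply: le_trans (le_h w) (ltW lt_BK).
Qed.

Lemma le_normr_Rintegral_bound (h : Om -> R) (B : R) :
  measurable_fun setT h -> (forall w, `|h w| <= B) -> `|Rintegral P setT h| <= B.
Proof.
move=> mh le_h; have ih := bounded_integrable mh le_h.
apply: le_trans (le_normr_Rintegral _ ih) _ => //.
apply: le_trans (le_Rintegral (f2 := fun=> B) _ (integrable_norm ih) _ _) _ => //.
- by apply: (bounded_integrable (B := `|B|)) => // w.
- by move=> w _; exact: le_h.
by rewrite Rintegral_cst // P_setT /= mulr1.
Qed.

Lemma Rintegral_probability_cst (c : R) : Rintegral P setT (fun=> c) = c.
Proof. by rewrite Rintegral_cst // P_setT /= mulr1. Qed.

End Expectation.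

Section SupNorm.
Variables (T : Type) (R : realType) (f : T -> R) (B : R).
Hypothesis f_le : forall x, `|f x| <= B.

Let range_ub : has_ubound (range (fun x => `|f x|)).
Proof. by exists B => _ [x _ <-]. Qed.

Lemma le_supnorm x : `|f x| <= supnorm f.
Proof. by apply: (ub_le_sup range_ub); exists x. Qed.

Lemma supnorm_ge0 : 0 <= supnorm f.
Proof.
rewrite /supnorm; have [->|/set0P [_ [x _ _]]] := eqVneq (range (fun x => `|f x|)) set0.
  by rewrite sup0.
exact: le_trans (le_supnorm x).
Qed.

Lemma supnorm_le : 0 <= B -> supnorm f <= B.
Proof.
rewrite /supnorm; have [->|ne B_ge0] := eqVneq (range (fun x => `|f x|)) set0.
  by rewrite sup0.
by apply: ge_sup; [exact/set0P | move=> _ [y _ <-]].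
Qed.

End SupNorm.

Lemma card_injective_ffun n N : #|[pred s : {ffun 'I_n -> 'I_N} | injectiveb s]| = N ^_ n.
Proof. by rewrite -cardsE card_inj_ffuns !card_ord. Qed.

Section UOperator.
Variables (S : Type) (R : realType) (n N : nat).
Implicit Types (g : n.-tuple S -> R) (y : N.-tuple S).

Lemma U_op_lincomb g g1 g2 (a b : R) y :
  U_op N (fun x => g x - (a * g1 x + b * g2 x)) y =
  U_op N g y - (a * U_op N g1 y + b * U_op N g2 y).
Proof. by rewrite /U_op sumrB big_split /= -!mulr_sumr; ring. Qed.

Hypothesis n_le_N : (n <= N)%N.

Let ffact_neq0 : (N ^_ n)%:R != 0 :> R.
Proof. by rewrite pnatr_eq0 -lt0n ffact_gt0. Qed.

Lemma U_op_cst (c : R) : U_op N (fun _ : n.-tuple S => c) = fun=> c.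
Proof.
apply/funext => y; rewrite /U_op sumr_const card_injective_ffun.
by rewrite -[c *+ _]mulr_natl mulrA mulVf ?mul1r.
Qed.

Lemma normr_U_op_le g B y : (forall x, `|g x| <= B) -> `|U_op N g y| <= B.
Proof.
move=> g_le; rewrite /U_op normrM normfV normr_nat ler_pdivrMl ?ltr0n ?ffact_gt0 //.
apply: le_trans (ler_norm_sum _ _ _) _.
apply: le_trans (ler_sum _ (fun s _ => g_le _)) _.
by rewrite sumr_const card_injective_ffun mulr_natl.
Qed.

End UOperator.

Section Exchangeable.
Variables (R : realType) (d : measure_display) (S : measurableType d).
Variables (d' : measure_display) (Om : measurableType d') (P : probability Om R).
Variables (n : nat) (X : Om -> n.-tuple S).
Hypotheses (mX : measurable_fun setT X) (hX : exchangeable P X).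
Implicit Types (g : n.-tuple S -> R).

Let E g := Rintegral P setT (fun w => g (X w)).

Lemma bmeas_integrable g : bmeas g -> P.-integrable setT (EFin \o (fun w => g (X w))).
Proof.
by move=> [mg [M g_le]]; exact: bounded_integrable (measurableT_comp mg mX) (fun w => g_le (X w)).
Qed.

Lemma Rintegral_perm_tuple g (p : {perm 'I_n}) : bmeas g ->
  Rintegral P setT (fun w => g (perm_tuple p (X w))) = E g.
Proof.
move=> [mg [M g_le]].
have mEg : measurable_fun setT (EFin \o g) by exact/measurable_EFinP.
have mXp : measurable_fun setT (perm_tuple p \o X).
  exact: measurableT_comp (measurable_perm_tuple p) mX.
have gY_int (Y : Om -> n.-tuple S) : measurable_fun setT Y ->
    P.-integrable (Y @^-1` setT) ((EFin \o g) \o Y).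
  move=> mY; rewrite preimage_setT.
  exact: bounded_integrable (measurableT_comp mg mY) (fun w => g_le (Y w)).
have := integral_pushforward mXp mEg (gY_int _ mXp) measurableT.
have := integral_pushforward mX mEg (gY_int _ mX) measurableT.
rewrite !preimage_setT /E /Rintegral => <- <-.
by congr fine; apply: eq_measure_integral => A mA _; exact: hX.
Qed.

Lemma Rintegral_symmetrize g : bmeas g ->
  Rintegral P setT (fun w => symmetrize g (X w)) = #|{perm 'I_n}|%:R * E g.
Proof.
move=> g_bm; have [mg [M g_le]] := g_bm.
have gp_int (p : {perm 'I_n}) : P.-integrable setT (fun w => (g (perm_tuple p (X w)))%:E).
  apply: (bounded_integrable P) (fun w => g_le _).
  exact: measurableT_comp mg (measurableT_comp (measurable_perm_tuple p) mX).
transitivity (\sum_(p : {perm 'I_n}) Rintegral P setT (fun w => g (perm_tuple p (X w)))).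
  rewrite /Rintegral sum_fine; last by move=> p _; exact: integrable_fin_num (gp_int p).
  congr fine; rewrite -(integral_sum measurableT gp_int).
  by apply: eq_integral => w _; rewrite sumEFin.
under eq_bigr do rewrite Rintegral_perm_tuple //.
by rewrite sumr_const mulr_natl.
Qed.

Lemma Rintegral_lincomb g g1 g2 (a b : R) : bmeas g -> bmeas g1 -> bmeas g2 ->
  E (fun x => g x - (a * g1 x + b * g2 x)) = E g - (a * E g1 + b * E g2).
Proof.
move=> g_bm g1_bm g2_bm; have ag1_bm := bmeasZ a g1_bm; have bg2_bm := bmeasZ b g2_bm.
move: (bmeas_integrable g_bm) (bmeas_integrable g1_bm) (bmeas_integrable g2_bm).
move: (bmeas_integrable ag1_bm) (bmeas_integrable bg2_bm).
move: (bmeas_integrable (bmeasD ag1_bm bg2_bm)) => ? ? ? ? ? ?.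
by rewrite /E RintegralB ?RintegralD ?RintegralZl.
Qed.

Variable N : nat.
Hypotheses (n_gt0 : (0 < n)%N) (n_le_N : (n <= N)%N).

Definition expectation_bound : R :=
  symmetrize_bound R n N n * (N ^_ n)%:R / #|{perm 'I_n}|%:R.

Lemma normr_E_le_U_op g M : bmeas g -> 0 <= M -> (forall y, `|U_op N g y| <= M) ->
  `|E g| <= expectation_bound * M.
Proof.
move=> g_bm M_ge0 Ug_le; have [mg _] := g_bm.
have ffact_gt0 : 0 < (N ^_ n)%:R :> R by rewrite ltr0n ffact_gt0.
have perm_gt0 : 0 < #|{perm 'I_n}|%:R :> R by rewrite ltr0n; apply/card_gt0P; exists 1%g.
have Usum_le (y : N.-tuple S) : `|Usum g y| <= (N ^_ n)%:R * M.
  by have := Ug_le y; rewrite /U_op normrM normfV normr_nat ler_pdivrMl.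
have sym_le := symmetrize_le n_gt0 n_le_N (mulr_ge0 (ltW ffact_gt0) M_ge0) Usum_le.
have msym : measurable_fun setT (fun w => symmetrize g (X w)).
  apply: measurable_sum => p.
  exact: measurableT_comp mg (measurableT_comp (measurable_perm_tuple p) mX).
have := le_normr_Rintegral_bound P msym (fun w => sym_le (X w)).
rewrite Rintegral_symmetrize // normrM normr_nat -ler_pdivlMl // /expectation_bound.
set c := symmetrize_bound R n N n; set F := (N ^_ n)%:R; set K := #|{perm _}|%:R.
by rewrite (_ : c * F / K * M = K^-1 * (c * (F * M))) //; ring.
Qed.

Lemma E_lincomb_of_U_op g g1 g2 (a b : R) : bmeas g -> bmeas g1 -> bmeas g2 ->
  (forall y, U_op N g y = a * U_op N g1 y + b * U_op N g2 y) ->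
  E g = a * E g1 + b * E g2.
Proof.
move=> g_bm g1_bm g2_bm U_eq; apply/eqP; rewrite -subr_eq0 -normr_le0.
rewrite -Rintegral_lincomb // -(mulr0 expectation_bound).
apply: normr_E_le_U_op => // [|y].
  by apply: bmeasB => //; apply: bmeasD; apply: bmeasZ.
by rewrite U_op_lincomb U_eq subrr normr0.
Qed.

End Exchangeable.

Theorem lemma5 (R : realType) (d : measure_display) (S : measurableType d)
  (d' : measure_display) (Om : measurableType d') (P : probability Om R)
  (n N : nat) (hn : (0 < n)%N) (hnN : (n <= N)%N)
  (X : Om -> n.-tuple S) (mX : measurable_fun setT X)
  (hX : exchangeable P X) :
  let E := fun g : n.-tuple S -> R => Rintegral P setT (fun w => g (X w)) in
  (* well defined *)
  (forall g1 g2, bmeas g1 -> bmeas g2 ->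
     U_op N g1 = U_op N g2 -> E g1 = E g2) /\
  (* linear *)
  (forall g g1 g2 (a b : R), bmeas g -> bmeas g1 -> bmeas g2 ->
     (forall x, U_op N g x = a * U_op N g1 x + b * U_op N g2 x) ->
     E g = a * E g1 + b * E g2) /\
  (* bounded *)
  (exists C : R, forall g, bmeas g -> `|E g| <= C * supnorm (U_op N g)) /\
  (* operator norm >= 1 *)
  (forall C : R, (forall g, bmeas g -> `|E g| <= C * supnorm (U_op N g)) ->
     1 <= C).
Proof.
move=> E; have E_lin := E_lincomb_of_U_op mX hX hn hnN.
split=> [g1 g2 g1_bm g2_bm U_eq|].
  have := E_lin g1 g2 g2 1 0 g1_bm g2_bm g2_bm; rewrite mul1r mul0r addr0; apply=> y.
  by rewrite U_eq mul1r mul0r addr0.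
split=> //; split.
  exists (expectation_bound R n N) => g g_bm.
  have [_ [M g_le]] := g_bm; have Ug_le := normr_U_op_le hnN _ g_le.
  apply: normr_E_le_U_op => //; first exact: supnorm_ge0 Ug_le.
  by move=> y; apply: le_supnorm Ug_le y.
move=> C E_le; have := E_le _ (bmeas_cst _ _ 1).
rewrite /E Rintegral_probability_cst U_op_cst // normr1.
have one_le1 (x : N.-tuple S) : `|(fun=> 1 : R) x| <= 1 by rewrite normr1.
have s_ge0 := supnorm_ge0 one_le1; have s_le1 := supnorm_le one_le1 ler01.
have [C_le0|C_gt0] := lerP C 0.
  by move=> /le_trans/(_ (mulr_le0_ge0 C_le0 s_ge0)); rewrite ler10.
by move=> /le_trans; apply; rewrite ler_piMr // ltW.
Qed.
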